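(* Let $R$ be a ring (associative with identity). Then the ring $B(R)$ of all $\omega\times\omega$ row-finite and column-finite matrices over $R$ is 2-clean.
   Context: A matrix indexed by $\mathbb{N}\times\mathbb{N}$ is row-finite (resp. column-finite) if each row (resp. column) has only finitely many nonzero entries; $B(R)$ is the ring of matrices that are both, under the usual matrix operations. For a positive integer $n$, a ring $S$ is called $n$-clean if every element of $S$ can be written as $e+u_1+\cdots+u_n$ with $e=e^2\in S$ and $u_1,\dots,u_n$ units of $S$. *)

From mathcomp Require Import all_boot all_algebra.
Set Implicit Arguments. Unset Strict Implicit. Unset Printing Implicit Defensive.
Import GRing.Theory.
Local Open Scope ring_scope.

Definition nmx (R : Type) := nat -> nat -> R.

Section BR.
Variable R : pzRingType.

Definition row_finite (A : nmx R) : Prop :=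
  forall i, exists N, forall j, (N <= j)%N -> A i j = 0.
Definition col_finite (A : nmx R) : Prop :=
  forall j, exists N, forall i, (N <= i)%N -> A i j = 0.
Definition inB (A : nmx R) : Prop := row_finite A /\ col_finite A.

(* C is the matrix product A*B: each entry is the (eventually constant,
   since A is row-finite) finite sum  sum_k A i k * B k j *)
Definition mx_prod (A B C : nmx R) : Prop :=
  forall i j, exists N, forall n, (N <= n)%N ->
    \sum_(k < n) A i k * B k j = C i j.

Definition idB : nmx R := fun i j => if i == j then 1 else 0.

Definition unitB (U : nmx R) : Prop :=
  inB U /\ exists V, inB V /\ mx_prod U V idB /\ mx_prod V U idB.

Definition idemB (E : nmx R) : Prop := inB E /\ mx_prod E E E.

Definition B_two_clean : Prop :=
  forall A, inB A -> exists E U1 U2,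
    idemB E /\ unitB U1 /\ unitB U2 /\
    forall i j, A i j = E i j + U1 i j + U2 i j.
End BR.

(* Splitting row and column indices by parity identifies a matrix of B(R) with
   the 2 x 2 block matrix of its four even/odd corners, and since rows are
   finitely supported the product of B(R) becomes the block product: B(R) is a
   homomorphic image of M_2(B(R)).  It is therefore enough that M_2(S) is 2-clean
   for every ring S, which is witnessed by
     [a b; c d] = [1 b-1; 0 0] + [x 1; 1+sx s] + [1 0; c-1-sx 1],
   x = a - 2, s = d - 1: the first summand is idempotent, the last unipotent,
   and the middle one has inverse [-s 1; 1+xs -x]. *)

From HB Require Import structures.
From mathcomp Require Import all_boot all_algebra zify boolp.
From Stdlib Require Import ClassicalEpsilon.
Set Implicit Arguments. Unset Strict Implicit. Unset Printing Implicit Defensive.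
Import GRing.Theory.
Local Open Scope ring_scope.

Section TwoClean.
Variable S : pzRingType.

Definition invertible (u : S) : Prop := exists v, u * v = 1 /\ v * u = 1.

Definition two_clean : Prop := forall x : S, exists e u1 u2,
  e * e = e /\ invertible u1 /\ invertible u2 /\ x = e + u1 + u2.
End TwoClean.

Lemma invertible_rmorph (S T : pzRingType) (f : {rmorphism S -> T}) u :
  invertible u -> invertible (f u).
Proof. by case=> v [uv vu]; exists (f v); rewrite -!rmorphM uv vu rmorph1. Qed.

Lemma two_clean_rmorph (S T : pzRingType) (f : {rmorphism S -> T}) (g : T -> S) :
  cancel g f -> two_clean S -> two_clean T.
Proof.
move=> gK cleanS y; have [e [u1 [u2 [ee [Hu1 [Hu2 gyE]]]]]] := cleanS (g y).
exists (f e), (f u1), (f u2); split; first by rewrite -rmorphM ee.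
do 2![split; first exact: invertible_rmorph].
by rewrite -!rmorphD -gyE gK.
Qed.

Section Matrix2.
Variable S : pzRingType.

Definition mx2 (a b c d : S) : 'M[S]_2 :=
  \matrix_(i, j) if i == 0 then (if j == 0 then a else b)
                 else (if j == 0 then c else d).

Lemma mx2_eta (M : 'M[S]_2) : M = mx2 (M 0 0) (M 0 1) (M 1 0) (M 1 1).
Proof.
by apply/matrixP => -[[|[|//]] ?] [[|[|//]] ?]; rewrite mxE; congr (M _ _); apply: val_inj.
Qed.

Lemma mx2D a b c d a' b' c' d' :
  mx2 a b c d + mx2 a' b' c' d' = mx2 (a + a') (b + b') (c + c') (d + d').
Proof. by apply/matrixP => i j; rewrite !mxE; case: eqP; case: eqP. Qed.

Lemma mx2M a b c d a' b' c' d' :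
  mx2 a b c d * mx2 a' b' c' d' =
  mx2 (a * a' + b * c') (a * b' + b * d') (c * a' + d * c') (c * b' + d * d').
Proof.
apply/matrixP => -[[|[|//]] ?] [[|[|//]] ?];
by rewrite !mxE !big_ord_recl big_ord0 addr0 !mxE.
Qed.

Lemma mx2_1 : mx2 1 0 0 1 = 1.
Proof. by apply/matrixP => -[[|[|//]] ?] [[|[|//]] ?]; rewrite !mxE. Qed.

Lemma mx2_idem b : mx2 1 b 0 0 * mx2 1 b 0 0 = mx2 1 b 0 0.
Proof. by rewrite mx2M !(mul1r, mulr1, mul0r, mulr0, addr0). Qed.

Lemma invertible_mx2_lower w : invertible (mx2 1 0 w 1).
Proof.
by exists (mx2 1 0 (- w) 1); rewrite !mx2M !(mul1r, mulr1, mul0r, mulr0, addr0, add0r) addrN addNr mx2_1.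
Qed.

Lemma invertible_mx2 x s : invertible (mx2 x 1 (1 + s * x) s).
Proof.
exists (mx2 (- s) 1 (1 + x * s) (- x)); rewrite !mx2M -mx2_1.
rewrite !(mul1r, mulr1, mulrN, mulNr, mulrDl, mulrDr, mulrA).
by split; congr mx2; rewrite ?subrr ?addNr ?addrK // addrC addrK.
Qed.

Lemma mx2_two_clean : two_clean 'M[S]_2.
Proof.
move=> M; rewrite [M]mx2_eta.
set a := M 0 0; set b := M 0 1; set c := M 1 0; set d := M 1 1.
set x := a - 2%:R; set s := d - 1; set q := 1 + s * x.
exists (mx2 1 (b - 1) 0 0), (mx2 x 1 q s), (mx2 1 0 (c - q) 1).
rewrite mx2_idem !mx2D; split=> //; split; first exact: invertible_mx2.
split; first exact: invertible_mx2_lower.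
congr mx2; rewrite ?add0r ?addr0.
- by rewrite addrAC addrC -mulr2n subrK.
- by rewrite subrK.
- by rewrite addrC subrK.
- by rewrite subrK.
Qed.
End Matrix2.

Lemma sum_ord_vanish (V : nmodType) (f : nat -> V) (N n : nat) :
  (forall k, (N <= k)%N -> f k = 0) -> (N <= n)%N ->
  \sum_(k < n) f k = \sum_(k < N) f k.
Proof.
move=> f0 leNn; rewrite -(subnKC leNn) big_split_ord /= [X in _ + X]big1 ?addr0 //.
by move=> k _; rewrite f0 ?leq_addr.
Qed.

Lemma sum_ord_double (V : nmodType) (f : nat -> V) n :
  \sum_(k < n.*2) f k = \sum_(k < n) f k.*2 + \sum_(k < n) f k.*2.+1.
Proof.
elim: n => [|n IH]; first by rewrite !big_ord0 addr0.
by rewrite doubleS !big_ord_recr /= IH addrACA -!addrA.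
Qed.

Section InfiniteMatrices.
Variable R : pzRingType.
Implicit Types A B C : nmx R.

Lemma nmx_ext A B : (forall i j, A i j = B i j) -> A = B.
Proof. by move=> eqAB; apply/funext => i; apply/funext => j. Qed.

(* Arbitrary junk values for a row or column that is not finitely supported. *)
Definition row_bound A i : nat :=
  epsilon (inhabits 0%N) (fun N => forall j, (N <= j)%N -> A i j = 0).
Definition col_bound A j : nat :=
  epsilon (inhabits 0%N) (fun N => forall i, (N <= i)%N -> A i j = 0).

Lemma row_boundP A : row_finite A -> forall i j, (row_bound A i <= j)%N -> A i j = 0.
Proof. by move=> rfA i; apply: (epsilon_spec (inhabits 0%N) _ (rfA i)). Qed.

Lemma col_boundP A : col_finite A -> forall j i, (col_bound A j <= i)%N -> A i j = 0.
Proof. by move=> cfA j; apply: (epsilon_spec (inhabits 0%N) _ (cfA j)). Qed.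

Definition addnmx A B : nmx R := fun i j => A i j + B i j.
Definition oppnmx A : nmx R := fun i j => - A i j.
Definition nmx0 : nmx R := fun _ _ => 0.
Definition mulnmx A B : nmx R := fun i j => \sum_(k < row_bound A i) A i k * B k j.

Lemma mulnmxE A B i j n : row_finite A ->
  (forall k, (n <= k)%N -> A i k * B k j = 0) ->
  mulnmx A B i j = \sum_(k < n) A i k * B k j.
Proof.
move=> rfA AB0.
have AB0' k : (row_bound A i <= k)%N -> A i k * B k j = 0.
  by move=> lek; rewrite (row_boundP rfA) ?mul0r.
by rewrite /mulnmx -(sum_ord_vanish AB0' (leq_maxr n _)) (sum_ord_vanish AB0) ?leq_maxl.
Qed.

Lemma mx_prod_mulnmx A B : row_finite A -> mx_prod A B (mulnmx A B).
Proof.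
move=> rfA i j; exists (row_bound A i) => n len; rewrite (@mulnmxE _ _ _ _ n) //.
by move=> k lek; rewrite (row_boundP rfA) ?mul0r //; apply: leq_trans lek.
Qed.

Lemma mulnmx_row_vanish A B : row_finite A -> row_finite B ->
  forall i j, (\max_(k < row_bound A i) row_bound B k <= j)%N -> mulnmx A B i j = 0.
Proof.
move=> rfA rfB i j lej; rewrite /mulnmx big1 // => k _.
rewrite (row_boundP rfB) ?mulr0 //; apply: leq_trans lej.
exact: (@leq_bigmax _ (fun k : 'I_(row_bound A i) => row_bound B k)).
Qed.

Lemma row_finite_mulnmx A B : row_finite A -> row_finite B -> row_finite (mulnmx A B).
Proof. by move=> rfA rfB i; eexists => j; apply: mulnmx_row_vanish. Qed.

Lemma inB_mulnmx A B : inB A -> inB B -> inB (mulnmx A B).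
Proof.
move=> [rfA cfA] [rfB cfB]; split; first exact: row_finite_mulnmx.
move=> j; exists (\max_(k < col_bound B j) col_bound A k) => i lei.
rewrite (@mulnmxE _ _ _ _ (col_bound B j)) //; last first.
  by move=> k lek; rewrite (col_boundP cfB) ?mulr0.
rewrite big1 // => k _; rewrite (col_boundP cfA) ?mul0r //; apply: leq_trans lei.
exact: (@leq_bigmax _ (fun k : 'I_(col_bound B j) => col_bound A k)).
Qed.

Lemma row_finite_addnmx A B : row_finite A -> row_finite B -> row_finite (addnmx A B).
Proof.
move=> rfA rfB i; exists (maxn (row_bound A i) (row_bound B i)) => j.
by rewrite geq_max => /andP[leA leB]; rewrite /addnmx (row_boundP rfA) ?(row_boundP rfB) ?addr0.
Qed.

Lemma inB_addnmx A B : inB A -> inB B -> inB (addnmx A B).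
Proof.
move=> [rfA cfA] [rfB cfB]; split; first exact: row_finite_addnmx.
move=> j; exists (maxn (col_bound A j) (col_bound B j)) => i; rewrite geq_max => /andP[leA leB].
by rewrite /addnmx (col_boundP cfA) ?(col_boundP cfB) ?addr0.
Qed.

Lemma inB_oppnmx A : inB A -> inB (oppnmx A).
Proof.
move=> [rfA cfA]; split.
  by move=> i; exists (row_bound A i) => j lej; rewrite /oppnmx (row_boundP rfA) ?oppr0.
by move=> j; exists (col_bound A j) => i lei; rewrite /oppnmx (col_boundP cfA) ?oppr0.
Qed.

Lemma inB_nmx0 : inB nmx0.
Proof. by split=> ?; exists 0%N. Qed.

Lemma inB_idB : inB (idB R).
Proof.
by split=> [i|j]; [exists i.+1 | exists j.+1] => k ltk; rewrite /idB; case: eqP => //; lia.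
Qed.

Lemma mulnmxA A B C : row_finite A -> row_finite B ->
  mulnmx (mulnmx A B) C = mulnmx A (mulnmx B C).
Proof.
move=> rfA rfB; apply: nmx_ext => i j.
set n := \max_(k < row_bound A i) row_bound B k.
have A0 k : (row_bound A i <= k)%N -> A i k = 0 by apply: row_boundP.
rewrite (@mulnmxE _ _ _ _ n (row_finite_mulnmx rfA rfB)); last first.
  by move=> k lek; rewrite mulnmx_row_vanish ?mul0r.
rewrite [RHS](@mulnmxE _ _ _ _ (row_bound A i)) //; last first.
  by move=> k /A0 ->; rewrite mul0r.
have ABE k : mulnmx A B i k = \sum_(l < row_bound A i) A i l * B l k.
  by apply: mulnmxE => // l /A0 ->; rewrite mul0r.
have BCE (l : 'I_(row_bound A i)) : mulnmx B C l j = \sum_(k < n) B l k * C k j.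
  apply: mulnmxE => // k lek; rewrite (row_boundP rfB) ?mul0r //; apply: leq_trans lek.
  exact: (@leq_bigmax _ (fun k : 'I_(row_bound A i) => row_bound B k)).
under eq_bigr => k _ do rewrite ABE mulr_suml.
under [in RHS]eq_bigr => l _ do rewrite BCE mulr_sumr.
by rewrite exchange_big; apply: eq_bigr => l _; apply: eq_bigr => k _; rewrite mulrA.
Qed.

Lemma mulnmxDr A B C : mulnmx A (addnmx B C) = addnmx (mulnmx A B) (mulnmx A C).
Proof.
by apply: nmx_ext => i j; rewrite /mulnmx /addnmx -big_split; apply: eq_bigr => k _; rewrite mulrDr.
Qed.

Lemma mulnmxDl A B C : row_finite A -> row_finite B ->
  mulnmx (addnmx A B) C = addnmx (mulnmx A C) (mulnmx B C).
Proof.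
move=> rfA rfB; apply: nmx_ext => i j.
set n := maxn (row_bound A i) (row_bound B i).
have A0 k : (n <= k)%N -> A i k = 0.
  by rewrite geq_max => /andP[lek _]; apply: row_boundP.
have B0 k : (n <= k)%N -> B i k = 0.
  by rewrite geq_max => /andP[_ lek]; apply: row_boundP.
rewrite /addnmx (@mulnmxE _ _ _ _ n (row_finite_addnmx rfA rfB)); last by move=> k len; rewrite /addnmx A0 ?B0 ?addr0 ?mul0r.
rewrite (@mulnmxE _ _ _ _ n) //; last by move=> k /A0 ->; rewrite mul0r.
rewrite (@mulnmxE _ _ _ _ n) //; last by move=> k /B0 ->; rewrite mul0r.
by rewrite -big_split; apply: eq_bigr => k _; rewrite mulrDl.
Qed.

Lemma mulnmx1 A : row_finite A -> mulnmx A (idB R) = A.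
Proof.
move=> rfA; apply: nmx_ext => i j; rewrite (@mulnmxE _ _ _ _ j.+1) //; last first.
  by move=> k ltk; rewrite /idB; case: eqP => [?|_]; [lia | rewrite mulr0].
rewrite big_ord_recr /= /idB eqxx mulr1 big1 ?add0r // => k _.
by case: eqP => [eqkj|_]; [have := ltn_ord k; lia | rewrite mulr0].
Qed.

Lemma mul1nmx A : mulnmx (idB R) A = A.
Proof.
apply: nmx_ext => i j; rewrite (@mulnmxE _ _ _ _ i.+1 inB_idB.1); last first.
  by move=> k ltk; rewrite /idB; case: eqP => [?|_]; [lia | rewrite mul0r].
rewrite big_ord_recr /= /idB eqxx mul1r big1 ?add0r // => k _.
by case: eqP => [eqik|_]; [have := ltn_ord k; lia | rewrite mul0r].
Qed.
End InfiniteMatrices.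

Section BlockDecomposition.
Variable R : pzRingType.
Implicit Types A a b c d : nmx R.

Definition block_nmx a b c d : nmx R := fun i j =>
  if odd i then (if odd j then d else c) i./2 j./2
  else (if odd j then b else a) i./2 j./2.

Definition corner_nmx (p q : bool) A : nmx R := fun i j => A (p + i.*2)%N (q + j.*2)%N.

Lemma block_nmx_corners A :
  block_nmx (corner_nmx false false A) (corner_nmx false true A)
          (corner_nmx true false A) (corner_nmx true true A) = A.
Proof.
apply: nmx_ext => i j; rewrite /block_nmx /corner_nmx.
have := odd_double_half i; have := odd_double_half j.
by case: (odd i); case: (odd j) => /= ej ei; rewrite -[in RHS]ei -[in RHS]ej.
Qed.

Lemma inB_corner_nmx p q A : inB A -> inB (corner_nmx p q A).
Proof.
case=> rfA cfA; split.
  by move=> i; exists (row_bound A (p + i.*2)) => j lej; apply: (row_boundP rfA); lia.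
by move=> j; exists (col_bound A (q + j.*2)) => i lei; apply: (col_boundP cfA); lia.
Qed.

Lemma row_finite_block_nmx a b c d : row_finite a -> row_finite b -> row_finite c ->
  row_finite d -> row_finite (block_nmx a b c d).
Proof.
move=> ra rb rc rd i.
set n := maxn (maxn (row_bound a i./2) (row_bound b i./2))
              (maxn (row_bound c i./2) (row_bound d i./2)).
exists n.*2 => j lej; have {lej}: (n <= j./2)%N by lia.
rewrite /block_nmx !geq_max => /andP[/andP[la lb] /andP[lc ld]].
by case: (odd i); case: (odd j); apply: row_boundP.
Qed.

Lemma col_finite_block_nmx a b c d : col_finite a -> col_finite b -> col_finite c ->
  col_finite d -> col_finite (block_nmx a b c d).
Proof.
move=> ca cb cc cd j.
set n := maxn (maxn (col_bound a j./2) (col_bound b j./2))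
              (maxn (col_bound c j./2) (col_bound d j./2)).
exists n.*2 => i lei; have {lei}: (n <= i./2)%N by lia.
rewrite /block_nmx !geq_max => /andP[/andP[la lb] /andP[lc ld]].
by case: (odd i); case: (odd j); apply: col_boundP.
Qed.

Lemma inB_block_nmx a b c d : inB a -> inB b -> inB c -> inB d -> inB (block_nmx a b c d).
Proof.
move=> [ra ca] [rb cb] [rc cc] [rd cd].
by split; [apply: row_finite_block_nmx | apply: col_finite_block_nmx].
Qed.

Lemma block_nmx_even a b c d i k :
  block_nmx a b c d i k.*2 = (if odd i then c else a) i./2 k.
Proof. by rewrite /block_nmx odd_double doubleK; case: (odd i). Qed.

Lemma block_nmx_odd a b c d i k :
  block_nmx a b c d i k.*2.+1 = (if odd i then d else b) i./2 k.
Proof. by rewrite /block_nmx /= odd_double uphalf_double; case: (odd i). Qed.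

Lemma mul_block_nmx a b c d a' b' c' d' :
  row_finite a -> row_finite b -> row_finite c -> row_finite d ->
  mulnmx (block_nmx a b c d) (block_nmx a' b' c' d') =
  block_nmx (addnmx (mulnmx a a') (mulnmx b c')) (addnmx (mulnmx a b') (mulnmx b d'))
          (addnmx (mulnmx c a') (mulnmx d c')) (addnmx (mulnmx c b') (mulnmx d d')).
Proof.
move=> ra rb rc rd; apply: nmx_ext => i j.
set n := maxn (maxn (row_bound a i./2) (row_bound b i./2))
              (maxn (row_bound c i./2) (row_bound d i./2)).
move: (leqnn n); rewrite {1}/n !geq_max => /andP[/andP[la lb] /andP[lc ld]].
have vanish (x : nmx R) : row_finite x -> (row_bound x i./2 <= n)%N ->
    forall k, (n <= k)%N -> x i./2 k = 0.
  by move=> rx lexn k lenk; apply: (row_boundP rx); apply: leq_trans lenk.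
have a0 := vanish a ra la; have b0 := vanish b rb lb.
have c0 := vanish c rc lc; have d0 := vanish d rd ld.
have rowE (x y : nmx R) : row_finite x -> (forall k, (n <= k)%N -> x i./2 k = 0) ->
    mulnmx x y i./2 j./2 = \sum_(k < n) x i./2 k * y k j./2.
  by move=> rx x0; apply: mulnmxE => // k /x0 ->; rewrite mul0r.
rewrite (@mulnmxE _ _ _ _ _ n.*2 (row_finite_block_nmx ra rb rc rd)); last first.
  move=> k lek; have {lek}: (n <= k./2)%N by lia.
  by rewrite {1}/block_nmx; case: (odd i); case: (odd k) => lek; rewrite ?a0 ?b0 ?c0 ?d0 ?mul0r.
rewrite (sum_ord_double (fun k => block_nmx a b c d i k * block_nmx a' b' c' d' k j)) /=.
under eq_bigr => k _ do rewrite block_nmx_even.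
under [X in _ + X]eq_bigr => k _ do rewrite block_nmx_odd.
rewrite /block_nmx /addnmx; case: (odd i); case: (odd j); rewrite !rowE //.
all: by congr (_ + _); apply: eq_bigr => k _; rewrite /= odd_double ?doubleK ?uphalf_double.
Qed.
Lemma add_block_nmx (a b c d a' b' c' d' : nmx R) :
  addnmx (block_nmx a b c d) (block_nmx a' b' c' d') =
  block_nmx (addnmx a a') (addnmx b b') (addnmx c c') (addnmx d d').
Proof. by apply: nmx_ext => i j; rewrite /block_nmx /addnmx; case: (odd i); case: (odd j). Qed.

Lemma block_nmx0 : block_nmx (@nmx0 R) (@nmx0 R) (@nmx0 R) (@nmx0 R) = @nmx0 R.
Proof. by apply: nmx_ext => i j; rewrite /block_nmx; case: (odd i); case: (odd j). Qed.

Lemma block_nmx1 : block_nmx (idB R) (@nmx0 R) (@nmx0 R) (idB R) = idB R.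
Proof.
apply: nmx_ext => i j; rewrite /block_nmx /idB /nmx0.
have := odd_double_half i; have := odd_double_half j.
by case: (odd i); case: (odd j) => /= ej ei; do 2?case: eqP => //; lia.
Qed.
End BlockDecomposition.

Section RingB.
Variable R : pzRingType.

Record bmx := BMx { bval : nmx R; bvalP : inB bval }.

HB.instance Definition _ := gen_eqMixin bmx.
HB.instance Definition _ := gen_choiceMixin bmx.

Lemma bval_inj : injective bval.
Proof. by case=> [A inA] [B inB] /= eqAB; subst B; congr BMx; apply: Prop_irrelevance. Qed.

Definition zeroB := BMx (@inB_nmx0 R).
Definition oppB (A : bmx) := BMx (inB_oppnmx (bvalP A)).
Definition addB (A B : bmx) := BMx (inB_addnmx (bvalP A) (bvalP B)).
Definition oneB := BMx (@inB_idB R).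
Definition mulB (A B : bmx) := BMx (inB_mulnmx (bvalP A) (bvalP B)).

Lemma addBA : associative addB.
Proof. by move=> A B C; apply/bval_inj/nmx_ext => i j; apply: addrA. Qed.
Lemma addBC : commutative addB.
Proof. by move=> A B; apply/bval_inj/nmx_ext => i j; apply: addrC. Qed.
Lemma add0B : left_id zeroB addB.
Proof. by move=> A; apply/bval_inj/nmx_ext => i j; apply: add0r. Qed.
Lemma addNB : left_inverse zeroB oppB addB.
Proof. by move=> A; apply/bval_inj/nmx_ext => i j; apply: addNr. Qed.

HB.instance Definition _ := GRing.isZmodule.Build bmx addBA addBC add0B addNB.

Lemma mulBA : associative mulB.
Proof. by move=> A B C; apply/bval_inj/nmx_ext => i j /=; rewrite mulnmxA //; apply: (bvalP _).1. Qed.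
Lemma mul1B : left_id oneB mulB.
Proof. by move=> A; apply/bval_inj/nmx_ext => i j /=; rewrite mul1nmx. Qed.
Lemma mulB1 : right_id oneB mulB.
Proof. by move=> A; apply/bval_inj/nmx_ext => i j /=; rewrite mulnmx1 //; apply: (bvalP _).1. Qed.
Lemma mulBDl : left_distributive mulB addB.
Proof. by move=> A B C; apply/bval_inj/nmx_ext => i j /=; rewrite mulnmxDl //; apply: (bvalP _).1. Qed.
Lemma mulBDr : right_distributive mulB addB.
Proof. by move=> A B C; apply/bval_inj/nmx_ext => i j /=; rewrite mulnmxDr. Qed.

HB.instance Definition _ :=
  GRing.Zmodule_isPzRing.Build bmx mulBA mul1B mulB1 mulBDl mulBDr.

Lemma mx_prod_bval (A B : bmx) : mx_prod (bval A) (bval B) (bval (A * B)).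
Proof. exact/mx_prod_mulnmx/(bvalP A).1. Qed.

Lemma idemB_bval (E : bmx) : E * E = E -> idemB (bval E).
Proof. by move=> EE; split; [exact: bvalP | have := mx_prod_bval E E; rewrite EE]. Qed.

Lemma unitB_bval (U : bmx) : invertible U -> unitB (bval U).
Proof.
case=> V [UV VU]; split; first exact: bvalP.
exists (bval V); split; first exact: bvalP.
by split; [have := mx_prod_bval U V; rewrite UV | have := mx_prod_bval V U; rewrite VU].
Qed.
End RingB.

Section BlockMorphism.
Variable R : pzRingType.
Local Notation B := (bmx R).

Definition bblock (M : 'M[B]_2) : B :=
  BMx (inB_block_nmx (bvalP (M 0 0)) (bvalP (M 0 1)) (bvalP (M 1 0)) (bvalP (M 1 1))).

Definition bcorners (A : B) : 'M[B]_2 :=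
  mx2 (BMx (inB_corner_nmx false false (bvalP A))) (BMx (inB_corner_nmx false true (bvalP A)))
      (BMx (inB_corner_nmx true false (bvalP A))) (BMx (inB_corner_nmx true true (bvalP A))).

Lemma bcornersK : cancel bcorners bblock.
Proof. by move=> A; apply: bval_inj; rewrite /= !mxE /= block_nmx_corners. Qed.

Lemma bblock0 : bblock 0 = 0.
Proof. by apply: bval_inj; rewrite /= !mxE block_nmx0. Qed.

Lemma bblockD : {morph bblock : M N / M + N}.
Proof. by move=> M N; apply: bval_inj; rewrite /= !mxE add_block_nmx. Qed.

Lemma bblock1 : bblock 1 = 1.
Proof. by apply: bval_inj; rewrite /= !mxE block_nmx1. Qed.

Lemma bblockM : {morph bblock : M N / M * N}.
Proof.
move=> M N; rewrite [M]mx2_eta [N]mx2_eta mx2M; apply: bval_inj.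
by rewrite /= !mxE /= mul_block_nmx //; apply: (bvalP _).1.
Qed.

HB.instance Definition _ := GRing.isNmodMorphism.Build _ _ bblock (bblock0, bblockD).
HB.instance Definition _ := GRing.isMonoidMorphism.Build _ _ bblock (bblock1, bblockM).
End BlockMorphism.

Theorem theorem8 (R : pzRingType) : B_two_clean R.
Proof.
move=> A inA.
have [E [U1 [U2 [EE [U1inv [U2inv AE]]]]]] :=
  two_clean_rmorph (@bcornersK R) (@mx2_two_clean _) (BMx inA).
exists (bval E), (bval U1), (bval U2).
split; first exact: idemB_bval.
do 2![split; first exact: unitB_bval].
by move=> i j; rewrite -[A]/(bval (BMx inA)) AE.
Qed.
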